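(* Let $N\ge 1$ and let $R(k_1,k_2)\in\mathrm{End}(\mathbb{C}^N\otimes\mathbb{C}^N)$ be a matrix-valued function of two real spectral parameters satisfying the Yang–Baxter equation $R_{12}(k_1,k_2)R_{13}(k_1,k_3)R_{23}(k_2,k_3)=R_{23}(k_2,k_3)R_{13}(k_1,k_3)R_{12}(k_1,k_2)$ and the unitarity condition $R_{12}(k_1,k_2)R_{21}(k_2,k_1)=\mathbb{I}\otimes\mathbb{I}$. Let $\mathcal{A}_R$ be the associated Zamolodchikov–Faddeev algebra and $T(k)$ its well-bred vertex operator (see context). Let $B(k)$ be a numerical $N\times N$ matrix-valued function such that $$R_{12}\,B_1\,R'_{21}\,B_2=B_2\,R'_{12}\,B_1\,\bar R_{21},\qquad B(k)B(-k)=\mathbb{I}_N .$$ Define $$\tilde a(k)=\tfrac12\big(a(k)+b(k)a(-k)\big),\quad \tilde a^\dagger(k)=\tfrac12\big(a^\dagger(k)+a^\dagger(-k)b(-k)\big),\quad b(k)=T(k)B(k)T(-k)^{-1}.$$ Then these elements satisfy the relations of the boundary algebra $\mathcal{B}_R$: $$\tilde a_1\tilde a_2=R_{21}\tilde a_2\tilde a_1,\qquad \tilde a^\dagger_1\tilde a^\dagger_2=\tilde a^\dagger_2\tilde a^\dagger_1R_{21},$$ $$\tilde a_1\tilde a^\dagger_2=\tilde a^\dagger_2R_{12}\tilde a_1+\tfrac12\delta_{12}+\tfrac12 b_{12},$$ $$\tilde a_1 b_2=R_{21}\,b_2\,R'_{12}\,\tilde a_1,\qquad b_1\tilde a^\dagger_2=\tilde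 a^\dagger_2\,R_{12}\,b_1\,R'_{21},$$ $$R_{12}\,b_1\,R'_{21}\,b_2=b_2\,R'_{12}\,b_1\,\bar R_{21},\qquad b(k)b(-k)=\mathbb{I}.$$
   Context: Notation: $e_i$ ($i=1,\dots,N$) is the standard column basis of $\mathbb{C}^N$, $e_i^\dagger$ the corresponding row vector, $E_{ij}$ the matrix units. Subscripts $1,2,3$ indicate the tensor factor of $\mathbb{C}^N$ on which a matrix acts and the spectral parameter $k_1,k_2,k_3$ attached: $R_{12}=R_{12}(k_1,k_2)$, $R_{21}=R_{21}(k_2,k_1)$ (i.e. $R$ acting in spaces $2,1$), $R'_{12}=R_{12}(k_1,-k_2)$, $R'_{21}=R_{21}(k_2,-k_1)$, $\bar R_{12}=R_{12}(-k_1,-k_2)$, $\bar R_{21}=R_{21}(-k_2,-k_1)$. For a matrix $M(k)$, $M_1=M(k_1)\otimes\mathbb{I}_N$, $M_2=\mathbb{I}_N\otimes M(k_2)$. ZF algebra $\mathcal{A}_R$: generators $a_i(k),a_i^\dagger(k)$, $i=1,\dots,N$, $k\in\mathbb{R}$; writing $a(k)=\sum_i a_i(k)e_i$ (column), $a^\dagger(k)=\sum_i a_i^\dagger(k)e_i^\dagger$ (row), $a_1=\sum_i a_i(k_1)e_i\otimes\mathbb{I}$, $a_2=\sum_i a_i(k_2)\mathbb{I}\otimes e_i$, similarly $a_1^\dagger,a_2^\dagger$, and $\delta_{12}=\delta(k_1-k_2)\sum_i e_i\otimes e_i^\dagger$, the relations are $a_1a_2=R_{21}a_2a_1$, $a_1^\dagger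 a_2^\dagger=a_2^\dagger a_1^\dagger R_{21}$, $a_1a_2^\dagger=a_2^\dagger R_{12}a_1+\delta_{12}$. Well-bred vertex operator: $T(k)=\sum_{i,j}T^{ij}(k)E_{ij}$, an invertible $N\times N$ matrix with entries in (a completion of) $\mathcal{A}_R$ (given by a normally ordered series in $a^\dagger,a$ with leading term $\mathbb{I}$), satisfying $T_1a_2=R_{21}a_2T_1$, $T_1a_2^\dagger=a_2^\dagger R_{12}T_1$, $R_{12}T_1T_2=T_2T_1R_{12}$. Also $b_1(k)=\sum_{ij}b_{ij}(k)E_{ij}\otimes\mathbb{I}$, $b_2(k)=\sum_{ij}b_{ij}(k)\mathbb{I}\otimes E_{ij}$, $\tilde a_1,\tilde a_2,\tilde a^\dagger_1,\tilde a^\dagger_2$ as for $a$, and $b_{12}=\delta(k_1+k_2)\sum_{i,j}b_{ij}(k_1)\,e_i\otimes e_j^\dagger$. *)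

From HB Require Import structures.
From mathcomp Require Import all_boot all_order all_algebra.
From mathcomp Require Import complex reals.
Set Implicit Arguments. Unset Strict Implicit. Unset Printing Implicit Defensive.
Import Order.TTheory GRing.Theory Num.Theory.
Local Open Scope ring_scope.

(* An operator M on C^N (x) C^N with entries in a ring S is stored as its    *)
(* components  M a b c d = <e_a (x) e_b | M | e_c (x) e_d>  (output indices   *)
(* a (space 1), b (space 2); input indices c (space 1), d (space 2)).         *)

Definition op2 (S : Type) (N : nat) := 'I_N -> 'I_N -> 'I_N -> 'I_N -> S.

Section Ops.
Variables (S : pzRingType) (N : nat).

Definition mul2 (M M' : op2 S N) : op2 S N :=
  fun a b c d => \sum_(x < N) \sum_(y < N) M a b x y * M' x y c d.

Definition id2 : op2 S N :=
  fun a b c d => ((a == c) && (b == d))%:R.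

(* M_{21} := P M P (the operator M acting in the spaces 2,1) *)
Definition swap2 (M : op2 S N) : op2 S N := fun a b c d => M b a d c.

Definition emb1 (M : 'I_N -> 'I_N -> S) : op2 S N :=
  fun a b c d => M a c * (b == d)%:R.
Definition emb2 (M : 'I_N -> 'I_N -> S) : op2 S N :=
  fun a b c d => (a == c)%:R * M b d.

End Ops.

Definition lift2 (C : pzRingType) (A : lalgType C) (N : nat) (M : op2 C N)
  : op2 A N := fun a b c d => (M a b c d)%:A.

(* The reflection-type equation
     R_12 M_1 R'_21 M_2 = M_2 R'_12 M_1 Rbar_21
   with R_12 = R(k1,k2), R'_21 = R_21(k2,-k1), R'_12 = R(k1,-k2),
   Rbar_21 = R_21(-k2,-k1), M_1 = M(k1) (x) I, M_2 = I (x) M(k2). *)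
Definition reflection_eq (K : numDomainType) (S : pzRingType) (N : nat)
  (R : K -> K -> op2 S N) (M : K -> 'I_N -> 'I_N -> S) (k1 k2 : K) : Prop :=
  mul2 (mul2 (mul2 (R k1 k2) (emb1 (M k1))) (swap2 (R k2 (- k1)))) (emb2 (M k2))
  = mul2 (mul2 (mul2 (emb2 (M k2)) (R k1 (- k2))) (emb1 (M k1)))
         (swap2 (R (- k2) (- k1))).

Definition yang_baxter (K : Type) (S : pzRingType) (N : nat)
  (R : K -> K -> op2 S N) : Prop :=
  forall (k1 k2 k3 : K) (a b c d e f : 'I_N),
    \sum_(x < N) \sum_(y < N) \sum_(z < N)
       R k1 k2 a b x y * R k1 k3 x c d z * R k2 k3 y z e f
  = \sum_(x < N) \sum_(y < N) \sum_(z < N)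
       R k2 k3 b c y z * R k1 k3 a z x f * R k1 k2 x y d e.

Definition unitarity (K : Type) (S : pzRingType) (N : nat)
  (R : K -> K -> op2 S N) : Prop :=
  forall k1 k2 : K, mul2 (R k1 k2) (swap2 (R k2 k1)) = @id2 S N.

From HB Require Import structures.
From mathcomp Require Import all_boot all_order all_algebra.
From mathcomp Require Import complex reals.
From mathcomp Require boolp.
Set Implicit Arguments. Unset Strict Implicit. Unset Printing Implicit Defensive.
Import Order.TTheory GRing.Theory Num.Theory.
Local Open Scope ring_scope.

(* Moving T(k), B(k) and T(-k)^-1 past a, one factor at a time, gives the exchange
   relations of b = T B T(-k)^-1 with a and a+, and conjugating the reflection equation
   of B by T with the RTT relation gives that of b. Each tilde operator is half the sum of
   a plain and a reflected term, so every boundary relation splits into four relations of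
   the ZF algebra extended by b, in which unitarity cancels the R-matrices that pile up.
   In the mixed relation the four delta-terms pair up into delta_12/2 + b_12/2, because
   b(k) b(-k) = 1 and delta is supported at 0. *)

Lemma addrACA4 (V : nmodType) (m1 m2 m3 m4 e1 e2 e3 e4 : V) :
  ((m1 + e1) + (m2 + e2)) + ((m3 + e3) + (m4 + e4))
  = ((m1 + m3) + (m2 + m4)) + ((e1 + e2) + (e3 + e4)).
Proof.
by rewrite [m1 + e1 + _]addrACA [m3 + e3 + _]addrACA addrACA [m1 + m2 + _]addrACA.
Qed.

Lemma scale_quarter_twice (F : numFieldType) (V : lmodType F) (x y : V) :
  2^-1 *: (2^-1 *: ((x + y) + (y + x))) = 2^-1 *: x + 2^-1 *: y.
Proof.
have half_twice : (2^-1 : F) *+ 2 = 1 by rewrite -[LHS]mulr_natr mulVf ?pnatr_eq0.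
by rewrite [y + x]addrC -mulr2n -scalerMnr scalerMnl half_twice scale1r scalerDr.
Qed.

(** * Operators on C^N (x) C^N *)

Section OperatorAlgebra.
Variables (S : pzRingType) (N : nat).
Implicit Types (X Y Z : op2 S N) (M P : 'M[S]_N).

Lemma op2_ext X Y : (forall a b c d, X a b c d = Y a b c d) -> X = Y.
Proof.
move=> eqXY; do 4![apply: boolp.funext => ?]; exact: eqXY.
Qed.

Definition add2 X Y : op2 S N := fun a b c d => X a b c d + Y a b c d.

Lemma mul2A : associative (@mul2 S N).
Proof.
move=> X Y Z; apply: op2_ext => a b c d; rewrite /mul2.
have expand (F : 'I_N -> 'I_N -> 'I_N -> 'I_N -> S) :
    \sum_(x < N) \sum_(y < N) \sum_(u < N) \sum_(v < N) F x y u v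
  = \sum_(u < N) \sum_(v < N) \sum_(x < N) \sum_(y < N) F x y u v.
  under eq_bigr do rewrite exchange_big; rewrite exchange_big.
  under eq_bigr do under eq_bigr do rewrite exchange_big.
  by under eq_bigr do rewrite exchange_big.
under eq_bigr do under eq_bigr do rewrite mulr_sumr.
under eq_bigr do under eq_bigr do under eq_bigr do rewrite mulr_sumr.
under [RHS]eq_bigr do under eq_bigr do rewrite mulr_suml.
under [RHS]eq_bigr do under eq_bigr do under eq_bigr do rewrite mulr_suml.
by rewrite expand; do 4!apply: eq_bigr => ? _; rewrite mulrA.
Qed.

Lemma mul2_1l : left_id (@id2 S N) (@mul2 S N).
Proof.
move=> X; apply: op2_ext => a b c d; rewrite /mul2 /id2.
rewrite (big_only1 a) // => [|x /negPf xa _]; last first.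
  by rewrite big1 // => y _; rewrite eq_sym xa mul0r.
rewrite (big_only1 b) // ?eqxx ?mulr1n ?mul1r // => y /negPf yb _.
by rewrite eq_sym yb andbF mul0r.
Qed.

Lemma mul2_1r : right_id (@id2 S N) (@mul2 S N).
Proof.
move=> X; apply: op2_ext => a b c d; rewrite /mul2 /id2.
rewrite (big_only1 c) // => [|x /negPf xc _]; last first.
  by rewrite big1 // => y _; rewrite xc mulr0.
rewrite (big_only1 d) // ?eqxx ?mulr1n ?mulr1 // => y /negPf yd _.
by rewrite yd andbF mulr0.
Qed.

Lemma mul2Dl : left_distributive (@mul2 S N) add2.
Proof.
move=> X Y Z; apply: op2_ext => a b c d; rewrite /mul2 /add2 -big_split.
by apply: eq_bigr => x _; rewrite -big_split; apply: eq_bigr => y _; rewrite mulrDl.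
Qed.

Lemma mul2Dr : right_distributive (@mul2 S N) add2.
Proof.
move=> X Y Z; apply: op2_ext => a b c d; rewrite /mul2 /add2 -big_split.
by apply: eq_bigr => x _; rewrite -big_split; apply: eq_bigr => y _; rewrite mulrDr.
Qed.

Lemma swap2K : involutive (@swap2 S N).
Proof. by []. Qed.

Lemma swap2_mul X Y : swap2 (mul2 X Y) = mul2 (swap2 X) (swap2 Y).
Proof. by apply: op2_ext => a b c d; rewrite /mul2 /swap2 exchange_big. Qed.

Lemma swap2_id : swap2 (@id2 S N) = @id2 S N.
Proof. by apply: op2_ext => a b c d; rewrite /swap2 /id2 andbC. Qed.

Lemma swap2_emb1 M : swap2 (emb1 M) = emb2 M.
Proof. by apply: op2_ext => a b c d; rewrite /swap2 /emb1 /emb2 commr_nat. Qed.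

Lemma swap2_emb2 M : swap2 (emb2 M) = emb1 M.
Proof. by apply: op2_ext => a b c d; rewrite /swap2 /emb1 /emb2 commr_nat. Qed.

Lemma mul2_emb1l M X a b c d :
  mul2 (emb1 M) X a b c d = \sum_(x < N) M a x * X x b c d.
Proof.
apply: eq_bigr => x _; rewrite /emb1 (big_only1 b) ?eqxx ?mulr1n ?mulr1 //.
by move=> y /negPf yb _; rewrite eq_sym yb mulr0 mul0r.
Qed.

Lemma mul2_emb2l M X a b c d :
  mul2 (emb2 M) X a b c d = \sum_(y < N) M b y * X a y c d.
Proof.
rewrite /mul2 /emb2 (big_only1 a) // => [|x /negPf xa _].
  by apply: eq_bigr => y _; rewrite eqxx mulr1n mul1r.
by rewrite big1 // => y _; rewrite eq_sym xa !mul0r.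
Qed.

Lemma mul2_emb1r X M a b c d :
  mul2 X (emb1 M) a b c d = \sum_(x < N) X a b x d * M x c.
Proof.
apply: eq_bigr => x _; rewrite /emb1 (big_only1 d) ?eqxx ?mulr1n ?mulr1 //.
by move=> y /negPf yd _; rewrite yd !mulr0.
Qed.

Lemma mul2_emb2r X M a b c d :
  mul2 X (emb2 M) a b c d = \sum_(y < N) X a b c y * M y d.
Proof.
rewrite /mul2 /emb2 (big_only1 c) // => [|x /negPf xc _].
  by apply: eq_bigr => y _; rewrite eqxx mulr1n mul1r.
by rewrite big1 // => y _; rewrite xc mul0r mulr0.
Qed.

Lemma mul2_emb12 M P a b c d : mul2 (emb1 M) (emb2 P) a b c d = M a c * P b d.
Proof.
rewrite mul2_emb1l (big_only1 c) /emb2 ?eqxx ?mulr1n ?mul1r //.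
by move=> x /negPf xc _; rewrite xc mul0r mulr0.
Qed.

Lemma mul2_emb21 M P a b c d : mul2 (emb2 P) (emb1 M) a b c d = P b d * M a c.
Proof.
rewrite mul2_emb2l (big_only1 d) /emb1 ?eqxx ?mulr1n ?mulr1 //.
by move=> y /negPf yd _; rewrite yd !mulr0.
Qed.

Lemma emb12C M P : (forall i j k l, M i j * P k l = P k l * M i j) ->
  mul2 (emb1 M) (emb2 P) = mul2 (emb2 P) (emb1 M).
Proof. by move=> MPC; apply: op2_ext => a b c d; rewrite mul2_emb12 mul2_emb21. Qed.

Lemma emb1M M P : emb1 (M *m P) = mul2 (emb1 M) (emb1 P).
Proof.
apply: op2_ext => a b c d; rewrite mul2_emb1l /emb1 mxE mulr_suml.
by apply: eq_bigr => x _; rewrite mulrA.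
Qed.

Lemma emb2M M P : emb2 (M *m P) = mul2 (emb2 M) (emb2 P).
Proof. by rewrite -[LHS]swap2_emb1 emb1M swap2_mul !swap2_emb1. Qed.

Lemma emb1_1 : emb1 (1%:M : 'M[S]_N) = @id2 S N.
Proof. by apply: op2_ext => a b c d; rewrite /emb1 /id2 mxE -natrM mulnb. Qed.

Lemma emb2_1 : emb2 (1%:M : 'M[S]_N) = @id2 S N.
Proof. by rewrite -[LHS]swap2_emb1 emb1_1 swap2_id. Qed.

Lemma emb1D M P : emb1 (M + P) = add2 (emb1 M) (emb1 P).
Proof. by apply: op2_ext => a b c d; rewrite /emb1 /add2 mxE mulrDl. Qed.

Lemma emb2D M P : emb2 (M + P) = add2 (emb2 M) (emb2 P).
Proof. by apply: op2_ext => a b c d; rewrite /emb2 /add2 mxE mulrDr. Qed.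

Lemma mul2_cancel X Y U : mul2 X Y = @id2 S N -> mul2 X (mul2 Y U) = U.
Proof. by move=> XY1; rewrite mul2A XY1 mul2_1l. Qed.

(* [delta12 e] is e (sum_i e_i (x) e_i^+), i.e. the delta_12 of the paper, in the
   encoding of vectors by [colsmx] and [rowsmx] below. *)
Definition delta12 (e : S) : op2 S N := fun a b c d => e * (a == d)%:R.

Lemma mul2_emb1_delta12 M e a b c d : mul2 (emb1 M) (delta12 e) a b c d = M a d * e.
Proof.
rewrite mul2_emb1l /delta12 (big_only1 d) ?eqxx ?mulr1 //.
by move=> x /negPf xd _; rewrite xd !mulr0.
Qed.

Lemma mul2_delta12_emb2 e M a b c d : mul2 (delta12 e) (emb2 M) a b c d = e * M a d.
Proof.
rewrite mul2_emb2r /delta12 (big_only1 a) => [|//|y /negPf ya _]; last first.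
  by rewrite eq_sym ya mulr0 mul0r.
by rewrite eqxx mulr1.
Qed.

End OperatorAlgebra.
Arguments add2 {S N}.
Arguments delta12 {S N}.

Section LiftedOperators.
Variables (C : pzRingType) (A : algType C) (N : nat).
Implicit Types (L : op2 C N) (X Y : op2 A N) (s : C).

Definition scale2 s X : op2 A N := fun a b c d => s *: X a b c d.

Lemma mul2Zl s X Y : mul2 (scale2 s X) Y = scale2 s (mul2 X Y).
Proof.
apply: op2_ext => a b c d; rewrite /mul2 /scale2 scaler_sumr.
by apply: eq_bigr => x _; rewrite scaler_sumr; apply: eq_bigr => y _; rewrite scalerAl.
Qed.

Lemma mul2Zr s X Y : mul2 X (scale2 s Y) = scale2 s (mul2 X Y).
Proof.
apply: op2_ext => a b c d; rewrite /mul2 /scale2 scaler_sumr.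
by apply: eq_bigr => x _; rewrite scaler_sumr; apply: eq_bigr => y _; rewrite scalerAr.
Qed.

Lemma emb1Z s (M : 'M[A]_N) : emb1 (s%:A *: M) = scale2 s (emb1 M).
Proof. by apply: op2_ext => a b c d; rewrite /emb1 /scale2 mxE mulr_algl scalerAl. Qed.

Lemma emb2Z s (M : 'M[A]_N) : emb2 (s%:A *: M) = scale2 s (emb2 M).
Proof. by apply: op2_ext => a b c d; rewrite /emb2 /scale2 mxE mulr_algl scalerAr. Qed.

Lemma lift2M L L' : lift2 A (mul2 L L') = mul2 (lift2 A L) (lift2 A L').
Proof.
apply: op2_ext => a b c d; rewrite /lift2 /mul2 scaler_suml.
apply: eq_bigr => x _; rewrite scaler_suml; apply: eq_bigr => y _.
by rewrite mulr_algl scalerA.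
Qed.

Lemma swap2_lift2 L : swap2 (lift2 A L) = lift2 A (swap2 L).
Proof. by []. Qed.

Lemma lift2_1 : lift2 A (@id2 C N) = @id2 A N.
Proof. by apply: op2_ext => a b c d; rewrite /lift2 /id2 -in_algE rmorph_nat. Qed.

Lemma mul2_lift2l L X a b c d :
  mul2 (lift2 A L) X a b c d = \sum_(x < N) \sum_(y < N) L a b x y *: X x y c d.
Proof. by apply: eq_bigr => x _; apply: eq_bigr => y _; rewrite mulr_algl. Qed.

Lemma mul2_lift2r X L a b c d :
  mul2 X (lift2 A L) a b c d = \sum_(x < N) \sum_(y < N) L x y c d *: X a b x y.
Proof. by apply: eq_bigr => x _; apply: eq_bigr => y _; rewrite mulr_algr. Qed.

Lemma emb1_in_alg (M : 'M[C]_N) : emb1 (map_mx (in_alg A) M) = lift2 A (emb1 M).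
Proof.
by apply: op2_ext => a b c d; rewrite /lift2 /emb1 mxE in_algE !mulr_natr scalerMnl.
Qed.

Lemma emb2_in_alg (M : 'M[C]_N) : emb2 (map_mx (in_alg A) M) = lift2 A (emb2 M).
Proof.
by apply: op2_ext => a b c d; rewrite /lift2 /emb2 mxE in_algE !mulr_natl scalerMnl.
Qed.

Lemma in_alg_emb1C (M : 'M[C]_N) (P : 'M[A]_N) :
  mul2 (emb1 (map_mx (in_alg A) M)) (emb2 P)
  = mul2 (emb2 P) (emb1 (map_mx (in_alg A) M)).
Proof. by apply: emb12C => i j k l; rewrite mxE /= mulr_algl mulr_algr. Qed.

Lemma in_alg_emb2C (M : 'M[C]_N) (P : 'M[A]_N) :
  mul2 (emb1 P) (emb2 (map_mx (in_alg A) M))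
  = mul2 (emb2 (map_mx (in_alg A) M)) (emb1 P).
Proof. by apply: emb12C => i j k l; rewrite mxE /= mulr_algl mulr_algr. Qed.

(* A column (row) vector is encoded as the square matrix all of whose columns (rows)
   equal it; the repeated index is a dummy, and vectors, matrices and their tensor products
   all become elements of [op2]. *)
Definition colsmx (v : 'I_N -> A) : 'M[A]_N := \matrix_(i, j) v i.
Definition rowsmx (w : 'I_N -> A) : 'M[A]_N := \matrix_(i, j) w j.

Lemma colsmxE v i j : colsmx v i j = v i. Proof. exact: mxE. Qed.
Lemma rowsmxE w i j : rowsmx w i j = w j. Proof. exact: mxE. Qed.

Lemma colsmx_comb s v (M : 'M[A]_N) w :
  colsmx (fun i => s *: (v i + \sum_(j < N) M i j * w j))
  = s%:A *: (colsmx v + M *m colsmx w).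
Proof.
apply/matrixP => i k; rewrite !mxE mulr_algl; congr (_ *: (_ + _)).
by apply: eq_bigr => j _; rewrite mxE.
Qed.

Lemma rowsmx_comb s w (M : 'M[A]_N) u :
  rowsmx (fun i => s *: (w i + \sum_(j < N) u j * M j i))
  = s%:A *: (rowsmx w + rowsmx u *m M).
Proof.
apply/matrixP => k i; rewrite !mxE mulr_algl; congr (_ *: (_ + _)).
by apply: eq_bigr => j _; rewrite mxE.
Qed.

End LiftedOperators.

(** * The ZF algebra, the vertex operator and b *)

Section BoundaryAlgebra.
Variables (K : realType) (N : nat).
Local Notation C := (complex K).
Variables (R : K -> K -> op2 C N) (A : algType C).
Hypothesis hU : unitarity R.
Variables (a ad : 'I_N -> K -> A) (delta : K -> A).
Hypothesis hdelta0 : forall x : K, x != 0 -> delta x = 0.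
Hypothesis hdeltaC : forall (x : K) (y : A), delta x * y = y * delta x.
Hypothesis hZF1 : forall (k1 k2 : K) (i j : 'I_N),
  a i k1 * a j k2 = \sum_(x < N) \sum_(y < N) R k2 k1 j i y x *: (a y k2 * a x k1).
Hypothesis hZF2 : forall (k1 k2 : K) (i j : 'I_N),
  ad i k1 * ad j k2 = \sum_(x < N) \sum_(y < N) R k2 k1 y x j i *: (ad y k2 * ad x k1).
Hypothesis hZF3 : forall (k1 k2 : K) (i j : 'I_N),
  a i k1 * ad j k2 = \sum_(x < N) \sum_(y < N) R k1 k2 i x y j *: (ad x k2 * a y k1)
                     + delta (k1 - k2) * (i == j)%:R.
Variables (T Tinv : K -> 'M[A]_N).
Hypothesis hTinv1 : forall k : K, T k *m Tinv k = 1%:M.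
Hypothesis hTinv2 : forall k : K, Tinv k *m T k = 1%:M.
Hypothesis hTa : forall (k1 k2 : K) (i j l : 'I_N),
  T k1 i j * a l k2 = \sum_(x < N) \sum_(y < N) R k2 k1 l i y x *: (a y k2 * T k1 x j).
Hypothesis hTad : forall (k1 k2 : K) (i j l : 'I_N),
  T k1 i j * ad l k2 = \sum_(x < N) \sum_(y < N) R k1 k2 i y x l *: (ad y k2 * T k1 x j).
Hypothesis hTT : forall k1 k2 : K,
  mul2 (lift2 A (R k1 k2)) (mul2 (emb1 (T k1)) (emb2 (T k2)))
  = mul2 (mul2 (emb2 (T k2)) (emb1 (T k1))) (lift2 A (R k1 k2)).
Variable B : K -> 'M[C]_N.
Hypothesis hB : forall k1 k2 : K, reflection_eq R (fun k i j => B k i j) k1 k2.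
Hypothesis hBinv : forall k : K, B k *m B (- k) = 1%:M.

Definition bmx k : 'M[A]_N := T k *m map_mx (in_alg A) (B k) *m Tinv (- k).

Local Notation "X ** Y" := (mul2 X Y) (at level 43, right associativity).
Local Notation R12 k1 k2 := (lift2 A (R k1 k2)).
Local Notation R21 k2 k1 := (swap2 (lift2 A (R k2 k1))).
Local Notation T1 k := (emb1 (T k)).
Local Notation T2 k := (emb2 (T k)).
Local Notation Ti1 k := (emb1 (Tinv k)).
Local Notation Ti2 k := (emb2 (Tinv k)).
Local Notation B1 k := (emb1 (map_mx (in_alg A) (B k))).
Local Notation B2 k := (emb2 (map_mx (in_alg A) (B k))).
Local Notation b1 k := (emb1 (bmx k)).
Local Notation b2 k := (emb2 (bmx k)).
Local Notation a1 k := (emb1 (colsmx (a^~ k))).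
Local Notation a2 k := (emb2 (colsmx (a^~ k))).
Local Notation ad1 k := (emb1 (rowsmx (ad^~ k))).
Local Notation ad2 k := (emb2 (rowsmx (ad^~ k))).
Local Notation delta_op k := (@delta12 _ N (delta k)).

(* Relations between operators are stated followed by an arbitrary factor [U],
   so that they rewrite inside right-nested products. *)

Lemma R12_R21K k1 k2 U : R12 k1 k2 ** R21 k2 k1 ** U = U.
Proof. by apply: mul2_cancel; rewrite swap2_lift2 -lift2M hU lift2_1. Qed.

Lemma R21_R12K k1 k2 U : R21 k2 k1 ** R12 k1 k2 ** U = U.
Proof.
apply: mul2_cancel; rewrite -[R12 k1 k2]swap2K -swap2_mul.
by rewrite swap2_lift2 -lift2M hU lift2_1 swap2_id.
Qed.

Lemma T1_Ti1K k U : T1 k ** Ti1 k ** U = U.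
Proof. by apply: mul2_cancel; rewrite -emb1M hTinv1 emb1_1. Qed.

Lemma Ti1_T1K k U : Ti1 k ** T1 k ** U = U.
Proof. by apply: mul2_cancel; rewrite -emb1M hTinv2 emb1_1. Qed.

Lemma T2_Ti2K k U : T2 k ** Ti2 k ** U = U.
Proof. by apply: mul2_cancel; rewrite -emb2M hTinv1 emb2_1. Qed.

Lemma Ti2_T2K k U : Ti2 k ** T2 k ** U = U.
Proof. by apply: mul2_cancel; rewrite -emb2M hTinv2 emb2_1. Qed.

Lemma b1E k U : b1 k ** U = T1 k ** B1 k ** Ti1 (- k) ** U.
Proof. by rewrite /bmx !emb1M -!mul2A. Qed.

Lemma b2E k U : b2 k ** U = T2 k ** B2 k ** Ti2 (- k) ** U.
Proof. by rewrite /bmx !emb2M -!mul2A. Qed.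

Lemma B1_emb2C k (P : 'M[A]_N) U : B1 k ** emb2 P ** U = emb2 P ** B1 k ** U.
Proof. by rewrite !mul2A in_alg_emb1C. Qed.

Lemma emb1_B2C k (P : 'M[A]_N) U : emb1 P ** B2 k ** U = B2 k ** emb1 P ** U.
Proof. by rewrite !mul2A in_alg_emb2C. Qed.

Lemma a1a2 k1 k2 U : a1 k1 ** a2 k2 ** U = R21 k2 k1 ** a2 k2 ** a1 k1 ** U.
Proof.
suff e : a1 k1 ** a2 k2 = R21 k2 k1 ** a2 k2 ** a1 k1 by rewrite [LHS]mul2A e -!mul2A.
apply: op2_ext => i j c d; rewrite mul2_emb12 swap2_lift2 mul2_lift2l !colsmxE hZF1.
by apply: eq_bigr => x _; apply: eq_bigr => y _; rewrite mul2_emb21 !colsmxE.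
Qed.

Lemma ad1ad2 k1 k2 U : ad1 k1 ** ad2 k2 ** U = ad2 k2 ** ad1 k1 ** R21 k2 k1 ** U.
Proof.
suff e : ad1 k1 ** ad2 k2 = (ad2 k2 ** ad1 k1) ** R21 k2 k1 by rewrite [LHS]mul2A e -!mul2A.
apply: op2_ext => i j c d; rewrite mul2_emb12 swap2_lift2 mul2_lift2r !rowsmxE hZF2.
by apply: eq_bigr => x _; apply: eq_bigr => y _; rewrite mul2_emb21 !rowsmxE.
Qed.

Lemma a1ad2 k1 k2 U :
  a1 k1 ** ad2 k2 ** U
  = add2 (ad2 k2 ** R12 k1 k2 ** a1 k1 ** U) (delta_op (k1 - k2) ** U).
Proof.
suff e : a1 k1 ** ad2 k2 = add2 (ad2 k2 ** R12 k1 k2 ** a1 k1) (delta_op (k1 - k2)).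
  by rewrite [LHS]mul2A e mul2Dl -!mul2A.
apply: op2_ext => i j c d; rewrite mul2_emb12 colsmxE rowsmxE hZF3 /add2 /delta12.
rewrite mul2_emb2l; congr (_ + _); apply: eq_bigr => y _.
rewrite rowsmxE mul2_emb1r mulr_sumr; apply: eq_bigr => x _.
by rewrite colsmxE mulr_algl scalerAr.
Qed.

Lemma T1a2 k1 k2 U : T1 k1 ** a2 k2 ** U = R21 k2 k1 ** a2 k2 ** T1 k1 ** U.
Proof.
suff e : T1 k1 ** a2 k2 = R21 k2 k1 ** a2 k2 ** T1 k1 by rewrite [LHS]mul2A e -!mul2A.
apply: op2_ext => i j c d; rewrite mul2_emb12 swap2_lift2 mul2_lift2l colsmxE hTa.
by apply: eq_bigr => x _; apply: eq_bigr => y _; rewrite mul2_emb21 colsmxE.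
Qed.

Lemma T1ad2 k1 k2 U : T1 k1 ** ad2 k2 ** U = ad2 k2 ** R12 k1 k2 ** T1 k1 ** U.
Proof.
suff e : T1 k1 ** ad2 k2 = ad2 k2 ** R12 k1 k2 ** T1 k1 by rewrite [LHS]mul2A e -!mul2A.
apply: op2_ext => i j c d; rewrite mul2_emb12 rowsmxE hTad mul2_emb2l exchange_big.
apply: eq_bigr => y _; rewrite rowsmxE mul2_emb1r mulr_sumr; apply: eq_bigr => x _.
by rewrite mulr_algl scalerAr.
Qed.

Lemma R12T1T2 k1 k2 U : R12 k1 k2 ** T1 k1 ** T2 k2 ** U = T2 k2 ** T1 k1 ** R12 k1 k2 ** U.
Proof. by rewrite !mul2A -[_ ** T2 k2]mul2A hTT. Qed.

Ltac mirror lem :=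
  have := congr1 (@swap2 _ _) lem; rewrite !swap2_mul ?swap2_emb1 ?swap2_emb2 ?swap2K.

Lemma R21T2T1 k1 k2 U : R21 k2 k1 ** T2 k2 ** T1 k1 ** U = T1 k1 ** T2 k2 ** R21 k2 k1 ** U.
Proof. by mirror (R12T1T2 k2 k1 (swap2 U)). Qed.

Lemma reflection_B k1 k2 U :
  R12 k1 k2 ** B1 k1 ** R21 k2 (- k1) ** B2 k2 ** U
  = B2 k2 ** R12 k1 (- k2) ** B1 k1 ** R21 (- k2) (- k1) ** U.
Proof.
rewrite !emb1_in_alg !emb2_in_alg !swap2_lift2 !mul2A -!lift2M.
by have := hB k1 k2; rewrite /reflection_eq => ->.
Qed.

Lemma T2a1 k1 k2 U : T2 k2 ** a1 k1 ** U = R12 k1 k2 ** a1 k1 ** T2 k2 ** U.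
Proof. by mirror (T1a2 k2 k1 (swap2 U)). Qed.

Lemma a1T2 k1 k2 U : a1 k1 ** T2 k2 ** U = R21 k2 k1 ** T2 k2 ** a1 k1 ** U.
Proof. by rewrite T2a1 R21_R12K. Qed.

Lemma a1Ti2 k1 k U : a1 k1 ** Ti2 k ** U = Ti2 k ** R12 k1 k ** a1 k1 ** U.
Proof. by rewrite -[LHS](Ti2_T2K k) T2a1 T2_Ti2K. Qed.

Lemma a1b2 k1 k2 U : a1 k1 ** b2 k2 ** U = R21 k2 k1 ** b2 k2 ** R12 k1 (- k2) ** a1 k1 ** U.
Proof. by rewrite !b2E a1T2 emb1_B2C a1Ti2. Qed.

Lemma a2b1 k1 k2 U : a2 k2 ** b1 k1 ** U = R12 k1 k2 ** b1 k1 ** R21 k2 (- k1) ** a2 k2 ** U.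
Proof. by mirror (a1b2 k2 k1 (swap2 U)). Qed.

Lemma Ti1ad2 k1 k2 U : Ti1 k1 ** ad2 k2 ** U = ad2 k2 ** Ti1 k1 ** R21 k2 k1 ** U.
Proof.
transitivity (Ti1 k1 ** ad2 k2 ** R12 k1 k2 ** T1 k1 ** Ti1 k1 ** R21 k2 k1 ** U).
  by rewrite T1_Ti1K R12_R21K.
by rewrite -T1ad2 Ti1_T1K.
Qed.

Lemma b1ad2 k1 k2 U : b1 k1 ** ad2 k2 ** U = ad2 k2 ** R12 k1 k2 ** b1 k1 ** R21 k2 (- k1) ** U.
Proof. by rewrite !b1E Ti1ad2 B1_emb2C T1ad2. Qed.

Lemma b2ad1 k1 k2 U : b2 k2 ** ad1 k1 ** U = ad1 k1 ** R21 k2 k1 ** b2 k2 ** R12 k1 (- k2) ** U.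
Proof. by mirror (b1ad2 k2 k1 (swap2 U)). Qed.

Lemma Ti1R21T2 k1 k2 U : Ti1 k1 ** R21 k2 k1 ** T2 k2 ** U = T2 k2 ** R21 k2 k1 ** Ti1 k1 ** U.
Proof.
transitivity (Ti1 k1 ** R21 k2 k1 ** T2 k2 ** T1 k1 ** Ti1 k1 ** U); first by rewrite T1_Ti1K.
by rewrite R21T2T1 Ti1_T1K.
Qed.

Lemma R21Ti1Ti2 k1 k2 U : R21 k2 k1 ** Ti1 k1 ** Ti2 k2 ** U = Ti2 k2 ** Ti1 k1 ** R21 k2 k1 ** U.
Proof.
transitivity (Ti2 k2 ** Ti1 k1 ** T1 k1 ** T2 k2 ** R21 k2 k1 ** Ti1 k1 ** Ti2 k2 ** U).
  by rewrite Ti1_T1K Ti2_T2K.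
by rewrite -R21T2T1 T1_Ti1K T2_Ti2K.
Qed.

Lemma Ti2R12T1 k1 k2 U : Ti2 k2 ** R12 k1 k2 ** T1 k1 ** U = T1 k1 ** R12 k1 k2 ** Ti2 k2 ** U.
Proof.
transitivity (Ti2 k2 ** R12 k1 k2 ** T1 k1 ** T2 k2 ** Ti2 k2 ** U); first by rewrite T2_Ti2K.
by rewrite R12T1T2 Ti2_T2K.
Qed.

Lemma reflection_b k1 k2 U :
  R12 k1 k2 ** b1 k1 ** R21 k2 (- k1) ** b2 k2 ** U
  = b2 k2 ** R12 k1 (- k2) ** b1 k1 ** R21 (- k2) (- k1) ** U.
Proof.
rewrite !b1E !b2E Ti1R21T2 B1_emb2C emb1_B2C R12T1T2 reflection_B R21Ti1Ti2.
by rewrite emb1_B2C B1_emb2C -Ti2R12T1.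
Qed.
(** * The boundary algebra *)

Definition atl i k : A := (2^-1 : C) *: (a i k + \sum_(j < N) bmx k i j * a j (- k)).
Definition adtl i k : A := (2^-1 : C) *: (ad i k + \sum_(j < N) ad j (- k) * bmx (- k) j i).

Local Notation at1 k := (emb1 (colsmx (atl^~ k))).
Local Notation at2 k := (emb2 (colsmx (atl^~ k))).
Local Notation adt1 k := (emb1 (rowsmx (adtl^~ k))).
Local Notation adt2 k := (emb2 (rowsmx (adtl^~ k))).

Lemma at1E k : at1 k = scale2 2^-1 (add2 (a1 k) (b1 k ** a1 (- k))).
Proof. by rewrite /atl colsmx_comb emb1Z emb1D emb1M. Qed.

Lemma at2E k : at2 k = scale2 2^-1 (add2 (a2 k) (b2 k ** a2 (- k))).
Proof. by rewrite /atl colsmx_comb emb2Z emb2D emb2M. Qed.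

Lemma adt1E k : adt1 k = scale2 2^-1 (add2 (ad1 k) (ad1 (- k) ** b1 (- k))).
Proof. by rewrite /adtl rowsmx_comb emb1Z emb1D emb1M. Qed.

Lemma adt2E k : adt2 k = scale2 2^-1 (add2 (ad2 k) (ad2 (- k) ** b2 (- k))).
Proof. by rewrite /adtl rowsmx_comb emb2Z emb2D emb2M. Qed.

Ltac expand_tilde :=
  rewrite ?at1E ?at2E ?adt1E ?adt2E ?(mul2Zl, mul2Zr, mul2Dl, mul2Dr) -?mul2A.

Lemma a1_b2a2 k1 k2 U :
  a1 k1 ** b2 k2 ** a2 (- k2) ** U = R21 k2 k1 ** b2 k2 ** a2 (- k2) ** a1 k1 ** U.
Proof. by rewrite a1b2 a1a2 R12_R21K. Qed.

Lemma b1a1_a2 k1 k2 U :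
  b1 k1 ** a1 (- k1) ** a2 k2 ** U = R21 k2 k1 ** a2 k2 ** b1 k1 ** a1 (- k1) ** U.
Proof. by rewrite a1a2 a2b1 R21_R12K. Qed.

Lemma b1a1_b2a2 k1 k2 U :
  b1 k1 ** a1 (- k1) ** b2 k2 ** a2 (- k2) ** U
  = R21 k2 k1 ** b2 k2 ** a2 (- k2) ** b1 k1 ** a1 (- k1) ** U.
Proof. by rewrite a1b2 a1a2 R12_R21K a2b1 -reflection_b R21_R12K. Qed.

Lemma at1at2 k1 k2 U : at1 k1 ** at2 k2 ** U = R21 k2 k1 ** at2 k2 ** at1 k1 ** U.
Proof.
expand_tilde; rewrite a1a2 a1_b2a2 b1a1_a2 b1a1_b2a2.
by apply: op2_ext => i j c d; rewrite /add2 /scale2 !scalerDr addrACA.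
Qed.

Lemma ad1_ad2b2 k1 k2 U :
  ad1 k1 ** ad2 (- k2) ** b2 (- k2) ** U = ad2 (- k2) ** b2 (- k2) ** ad1 k1 ** R21 k2 k1 ** U.
Proof. by rewrite ad1ad2 b2ad1 opprK R12_R21K. Qed.

Lemma ad1b1_ad2 k1 k2 U :
  ad1 (- k1) ** b1 (- k1) ** ad2 k2 ** U = ad2 k2 ** ad1 (- k1) ** b1 (- k1) ** R21 k2 k1 ** U.
Proof. by rewrite b1ad2 ad1ad2 R21_R12K opprK. Qed.

Lemma ad1b1_ad2b2 k1 k2 U :
  ad1 (- k1) ** b1 (- k1) ** ad2 (- k2) ** b2 (- k2) ** U
  = ad2 (- k2) ** b2 (- k2) ** ad1 (- k1) ** b1 (- k1) ** R21 k2 k1 ** U.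
Proof.
have := reflection_b (- k1) (- k2) U; rewrite !opprK => reflection_bN.
by rewrite b1ad2 ad1ad2 R21_R12K b2ad1 !opprK -reflection_bN R21_R12K.
Qed.

Lemma adt1adt2 k1 k2 U : adt1 k1 ** adt2 k2 ** U = adt2 k2 ** adt1 k1 ** R21 k2 k1 ** U.
Proof.
expand_tilde; rewrite ad1ad2 ad1_ad2b2 ad1b1_ad2 ad1b1_ad2b2.
by apply: op2_ext => i j c d; rewrite /add2 /scale2 !scalerDr addrACA.
Qed.

Lemma a1_ad2b2 k1 k2 U :
  a1 k1 ** ad2 (- k2) ** b2 (- k2) ** U
  = add2 (ad2 (- k2) ** b2 (- k2) ** R12 k1 k2 ** a1 k1 ** U)
         (delta_op (k1 + k2) ** b2 (- k2) ** U).
Proof. by rewrite a1ad2 a1b2 R12_R21K opprK. Qed.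

Lemma b1a1_ad2 k1 k2 U :
  b1 k1 ** a1 (- k1) ** ad2 k2 ** U
  = add2 (ad2 k2 ** R12 k1 k2 ** b1 k1 ** a1 (- k1) ** U)
         (b1 k1 ** delta_op (- k1 - k2) ** U).
Proof. by rewrite a1ad2 mul2Dr b1ad2 R21_R12K. Qed.

Lemma b1a1_ad2b2 k1 k2 U :
  b1 k1 ** a1 (- k1) ** ad2 (- k2) ** b2 (- k2) ** U
  = add2 (ad2 (- k2) ** b2 (- k2) ** R12 k1 k2 ** b1 k1 ** a1 (- k1) ** U)
         (b1 k1 ** delta_op (- k1 + k2) ** b2 (- k2) ** U).
Proof. by rewrite a1ad2 mul2Dr b1ad2 R21_R12K a1b2 reflection_b !opprK R21_R12K. Qed.

Lemma at1adt2 k1 k2 U :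
  at1 k1 ** adt2 k2 ** U
  = add2 (adt2 k2 ** R12 k1 k2 ** at1 k1 ** U)
      (scale2 2^-1 (scale2 2^-1
         (add2 (add2 (delta_op (k1 - k2) ** U) (delta_op (k1 + k2) ** b2 (- k2) ** U))
               (add2 (b1 k1 ** delta_op (- k1 - k2) ** U)
                     (b1 k1 ** delta_op (- k1 + k2) ** b2 (- k2) ** U))))).
Proof.
expand_tilde; rewrite a1ad2 a1_ad2b2 b1a1_ad2 b1a1_ad2b2.
by apply: op2_ext => i j c d; rewrite /add2 /scale2 !scalerDr addrACA4.
Qed.

Lemma b1a1_b2 k1 k2 U :
  b1 k1 ** a1 (- k1) ** b2 k2 ** U
  = R21 k2 k1 ** b2 k2 ** R12 k1 (- k2) ** b1 k1 ** a1 (- k1) ** U.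
Proof.
transitivity (R21 k2 k1 ** b2 k2 ** R12 k1 (- k2) ** b1 k1 ** R21 (- k2) (- k1)
                ** R12 (- k1) (- k2) ** a1 (- k1) ** U); last by rewrite R21_R12K.
by rewrite -reflection_b R21_R12K a1b2.
Qed.

Lemma at1b2 k1 k2 U : at1 k1 ** b2 k2 ** U = R21 k2 k1 ** b2 k2 ** R12 k1 (- k2) ** at1 k1 ** U.
Proof. by expand_tilde; rewrite a1b2 b1a1_b2. Qed.

Lemma b1_ad2b2 k1 k2 U :
  b1 k1 ** ad2 (- k2) ** b2 (- k2) ** U
  = ad2 (- k2) ** b2 (- k2) ** R12 k1 k2 ** b1 k1 ** R21 k2 (- k1) ** U.
Proof. by rewrite b1ad2 reflection_b !opprK. Qed.

Lemma b1adt2 k1 k2 U : b1 k1 ** adt2 k2 ** U = adt2 k2 ** R12 k1 k2 ** b1 k1 ** R21 k2 (- k1) ** U.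
Proof. by expand_tilde; rewrite b1ad2 b1_ad2b2. Qed.

Lemma bmxN k : bmx k *m bmx (- k) = 1%:M.
Proof.
rewrite /bmx opprK -!mulmxA (mulmxA (Tinv (- k))) hTinv2 mul1mx.
by rewrite (mulmxA (map_mx _ _)) -map_mxM hBinv map_mx1 mul1mx hTinv1.
Qed.

Lemma delta_bmxN k1 k2 i j : delta (k1 + k2) * bmx (- k2) i j = delta (k1 + k2) * bmx k1 i j.
Proof.
have [k12_0 | k12_neq0] := eqVneq (k1 + k2) 0; last by rewrite hdelta0 // !mul0r.
by move/eqP: k12_0; rewrite addr_eq0 => /eqP <-.
Qed.

Lemma bmx_delta k1 k2 i j : bmx k1 i j * delta (- k1 - k2) = delta (k1 + k2) * bmx k1 i j.
Proof.
rewrite -hdeltaC -opprD; have [-> | k12_neq0] := eqVneq (k1 + k2) 0; first by rewrite oppr0.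
by rewrite !hdelta0 ?oppr_eq0.
Qed.

Lemma bmx_delta_bmx k1 k2 i j :
  \sum_(x < N) bmx k1 i x * (delta (- k1 + k2) * bmx (- k2) x j)
  = delta (k1 - k2) * (i == j)%:R.
Proof.
have [<- | k12_neq] := eqVneq k1 k2.
  under eq_bigr do rewrite mulrA -hdeltaC -mulrA.
  rewrite addNr subrr -mulr_sumr; congr (_ * _).
  by have /matrixP/(_ i j) := bmxN k1; rewrite !mxE.
rewrite !hdelta0 ?mul0r ?big1 // => [x _ | |]; first by rewrite mul0r mulr0.
- by rewrite subr_eq0.
- by rewrite addrC subr_eq0 eq_sym.
Qed.

Lemma at_at k1 k2 i j :
  atl i k1 * atl j k2 = \sum_(x < N) \sum_(y < N) R k2 k1 j i y x *: (atl y k2 * atl x k1).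
Proof.
transitivity ((at1 k1 ** at2 k2 ** @id2 A N) i j i j).
  by rewrite mul2_1r mul2_emb12 !colsmxE.
rewrite at1at2 mul2_1r swap2_lift2 mul2_lift2l.
by apply: eq_bigr => x _; apply: eq_bigr => y _; rewrite mul2_emb21 !colsmxE.
Qed.

Lemma adt_adt k1 k2 i j :
  adtl i k1 * adtl j k2 = \sum_(x < N) \sum_(y < N) R k2 k1 y x j i *: (adtl y k2 * adtl x k1).
Proof.
transitivity ((adt1 k1 ** adt2 k2 ** @id2 A N) i i i j).
  by rewrite mul2_1r mul2_emb12 !rowsmxE.
rewrite adt1adt2 mul2_1r mul2A swap2_lift2 mul2_lift2r.
by apply: eq_bigr => x _; apply: eq_bigr => y _; rewrite mul2_emb21 !rowsmxE.
Qed.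

Lemma at_adt k1 k2 i j :
  atl i k1 * adtl j k2
  = \sum_(x < N) \sum_(y < N) R k1 k2 i x y j *: (adtl x k2 * atl y k1)
    + 2^-1 *: (delta (k1 - k2) * (i == j)%:R) + 2^-1 *: (delta (k1 + k2) * bmx k1 i j).
Proof.
transitivity ((at1 k1 ** adt2 k2 ** @id2 A N) i i i j).
  by rewrite mul2_1r mul2_emb12 colsmxE rowsmxE.
rewrite at1adt2 !mul2_1r {1}/add2 -addrA; congr (_ + _).
  rewrite mul2_emb2l; apply: eq_bigr => x _; rewrite rowsmxE mul2_emb1r mulr_sumr.
  by apply: eq_bigr => y _; rewrite colsmxE mulr_algl scalerAr.
rewrite /scale2 /add2 mul2_emb1_delta12 mul2_delta12_emb2 mul2_emb1l.
under eq_bigr do rewrite mul2_delta12_emb2.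
by rewrite bmx_delta_bmx delta_bmxN bmx_delta {1}/delta12 scale_quarter_twice.
Qed.

Lemma at_bmx k1 k2 i j l :
  atl i k1 * bmx k2 j l
  = \sum_(x < N) \sum_(y < N) \sum_(y' < N) \sum_(z < N)
      R k2 k1 j i y x *: (bmx k2 y y' * (R k1 (- k2) x y' z l *: atl z k1)).
Proof.
transitivity ((at1 k1 ** b2 k2 ** @id2 A N) i j i l).
  by rewrite mul2_1r mul2_emb12 colsmxE.
rewrite at1b2 mul2_1r swap2_lift2 mul2_lift2l; apply: eq_bigr => x _; apply: eq_bigr => y _.
rewrite mul2_emb2l scaler_sumr; apply: eq_bigr => y' _.
rewrite mul2_emb1r mulr_sumr scaler_sumr; apply: eq_bigr => z _.
by rewrite colsmxE mulr_algl.
Qed.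

Lemma bmx_adt k1 k2 i j l :
  bmx k1 i j * adtl l k2
  = \sum_(z < N) \sum_(x < N) \sum_(x' < N) \sum_(y < N)
      adtl z k2 * (R k1 k2 i z x y *: (bmx k1 x x' * (R k2 (- k1) y x' l j)%:A)).
Proof.
transitivity ((b1 k1 ** adt2 k2 ** @id2 A N) i i j l).
  by rewrite mul2_1r mul2_emb12 rowsmxE.
rewrite b1adt2 mul2_1r mul2_emb2l; apply: eq_bigr => z _.
rewrite rowsmxE mul2_lift2l mulr_sumr; apply: eq_bigr => x _.
rewrite mulr_sumr exchange_big; apply: eq_bigr => y _.
by rewrite mul2_emb1l scaler_sumr mulr_sumr.
Qed.

Lemma reflection_eq_bmx k1 k2 :
  reflection_eq (fun k k' => lift2 A (R k k')) (fun k i j => bmx k i j) k1 k2.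
Proof.
have := reflection_b k1 k2 (@id2 A N); rewrite !mul2_1r => refl_b.
by rewrite /reflection_eq -!mul2A; exact: refl_b.
Qed.

End BoundaryAlgebra.

Theorem mainTheorem1
  (K : realType) (N : nat) (hN : (0 < N)%N)
  (* the R-matrix, R k1 k2 a b c d = <e_a (x) e_b| R(k1,k2) |e_c (x) e_d> *)
  (R : K -> K -> op2 (complex K) N)
  (hYB : yang_baxter R) (hU : unitarity R)
  (* the (completed) ZF algebra: an associative complex algebra *)
  (A : algType (complex K))
  (a ad : 'I_N -> K -> A)
  (* delta k stands for the c-number delta(k) (times the unit) *)
  (delta : K -> A)
  (hdelta0 : forall x : K, x != 0 -> delta x = 0)
  (hdeltaC : forall (x : K) (y : A), delta x * y = y * delta x)
  (* a_1 a_2 = R_21 a_2 a_1 *)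
  (hZF1 : forall (k1 k2 : K) (i j : 'I_N),
     a i k1 * a j k2
     = \sum_(x < N) \sum_(y < N) R k2 k1 j i y x *: (a y k2 * a x k1))
  (* a+_1 a+_2 = a+_2 a+_1 R_21 *)
  (hZF2 : forall (k1 k2 : K) (i j : 'I_N),
     ad i k1 * ad j k2
     = \sum_(x < N) \sum_(y < N) R k2 k1 y x j i *: (ad y k2 * ad x k1))
  (* a_1 a+_2 = a+_2 R_12 a_1 + delta_12 *)
  (hZF3 : forall (k1 k2 : K) (i j : 'I_N),
     a i k1 * ad j k2
     = \sum_(x < N) \sum_(y < N) R k1 k2 i x y j *: (ad x k2 * a y k1)
       + delta (k1 - k2) * (i == j)%:R)
  (* the well-bred vertex operator T and its inverse *)
  (T Tinv : K -> 'M[A]_N)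
  (hTinv1 : forall k : K, T k *m Tinv k = 1%:M)
  (hTinv2 : forall k : K, Tinv k *m T k = 1%:M)
  (* T_1 a_2 = R_21 a_2 T_1 *)
  (hTa : forall (k1 k2 : K) (i j l : 'I_N),
     T k1 i j * a l k2
     = \sum_(x < N) \sum_(y < N) R k2 k1 l i y x *: (a y k2 * T k1 x j))
  (* T_1 a+_2 = a+_2 R_12 T_1 *)
  (hTad : forall (k1 k2 : K) (i j l : 'I_N),
     T k1 i j * ad l k2
     = \sum_(x < N) \sum_(y < N) R k1 k2 i y x l *: (ad y k2 * T k1 x j))
  (* R_12 T_1 T_2 = T_2 T_1 R_12 *)
  (hTT : forall k1 k2 : K,
     mul2 (@lift2 _ A N (R k1 k2))
          (mul2 (emb1 (fun i j => T k1 i j)) (emb2 (fun i j => T k2 i j)))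
     = mul2 (mul2 (emb2 (fun i j => T k2 i j)) (emb1 (fun i j => T k1 i j)))
            (@lift2 _ A N (R k1 k2)))
  (* the numerical reflection matrix B *)
  (B : K -> 'M[complex K]_N)
  (hB : forall k1 k2 : K, reflection_eq R (fun k i j => B k i j) k1 k2)
  (hBinv : forall k : K, B k *m B (- k) = 1%:M) :
  let b : K -> 'M[A]_N :=
    fun k => T k *m map_mx (in_alg A) (B k) *m Tinv (- k) in
  let atil : 'I_N -> K -> A := fun i k =>
    (2^-1 : complex K) *: (a i k + \sum_(j < N) b k i j * a j (- k)) in
  let adtil : 'I_N -> K -> A := fun i k =>
    (2^-1 : complex K) *: (ad i k + \sum_(j < N) ad j (- k) * b (- k) j i) in
  (* ~a_1 ~a_2 = R_21 ~a_2 ~a_1 *)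
  (forall (k1 k2 : K) (i j : 'I_N),
     atil i k1 * atil j k2
     = \sum_(x < N) \sum_(y < N) R k2 k1 j i y x *: (atil y k2 * atil x k1))
  (* ~a+_1 ~a+_2 = ~a+_2 ~a+_1 R_21 *)
  /\ (forall (k1 k2 : K) (i j : 'I_N),
     adtil i k1 * adtil j k2
     = \sum_(x < N) \sum_(y < N) R k2 k1 y x j i *: (adtil y k2 * adtil x k1))
  (* ~a_1 ~a+_2 = ~a+_2 R_12 ~a_1 + 1/2 delta_12 + 1/2 b_12 *)
  /\ (forall (k1 k2 : K) (i j : 'I_N),
     atil i k1 * adtil j k2
     = \sum_(x < N) \sum_(y < N) R k1 k2 i x y j *: (adtil x k2 * atil y k1)
       + (2^-1 : complex K) *: (delta (k1 - k2) * (i == j)%:R)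
       + (2^-1 : complex K) *: (delta (k1 + k2) * b k1 i j))
  (* ~a_1 b_2 = R_21 b_2 R'_12 ~a_1 *)
  /\ (forall (k1 k2 : K) (i j l : 'I_N),
     atil i k1 * b k2 j l
     = \sum_(x < N) \sum_(y < N) \sum_(y' < N) \sum_(z < N)
         R k2 k1 j i y x *: (b k2 y y' * (R k1 (- k2) x y' z l *: atil z k1)))
  (* b_1 ~a+_2 = ~a+_2 R_12 b_1 R'_21 *)
  /\ (forall (k1 k2 : K) (i j l : 'I_N),
     b k1 i j * adtil l k2
     = \sum_(z < N) \sum_(x < N) \sum_(x' < N) \sum_(y < N)
         adtil z k2 * (R k1 k2 i z x y *: (b k1 x x' * (R k2 (- k1) y x' l j)%:A)))
  (* R_12 b_1 R'_21 b_2 = b_2 R'_12 b_1 Rbar_21 *)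
  /\ (forall k1 k2 : K,
     reflection_eq (fun k k' => @lift2 _ A N (R k k')) (fun k i j => b k i j) k1 k2)
  (* b(k) b(-k) = 1 *)
  /\ (forall k : K, b k *m b (- k) = 1%:M).
Proof.
move=> b atil adtil.
split; first by move=> *; apply: at_at.
split; first by move=> *; apply: adt_adt.
split; first by move=> *; apply: at_adt.
split; first by move=> *; apply: at_bmx.
split; first by move=> *; apply: bmx_adt.
split; first by move=> *; apply: reflection_eq_bmx.
by move=> k; apply: bmxN.
Qed.
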